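(* Let $\mathcal{Z}$ be a $C$-Bourgain-Delbaen-$\mathscr{L}_\infty$ sum of a sequence of Banach spaces $(X_n)_{n=1}^\infty$, with associated maps $i_n:\mathcal{W}_n\to\mathcal{W}$, restrictions $r_n$, and subspaces $\mathcal{Z}_n$. Then: (i) $(\mathcal{Z}_n)_{n=1}^\infty$ is a Schauder decomposition of $\mathcal{Z}$ with associated projections $P_n=i_nr_n|_{\mathcal{Z}}:\mathcal{Z}\to\mathcal{Z}$, $n\in\mathbb{N}$; (ii) for all $n\in\mathbb{N}$, $P_n(\mathcal{Z})=i_n(\mathcal{W}_n)$.
   Context: Let $(X_n)_{n=1}^\infty$ be Banach spaces and $(\Delta_n)_{n=1}^\infty$ disjoint finite sets. Let $\mathcal{W}=\big(\oplus_{n=1}^\infty(X_n\oplus\ell_\infty(\Delta_n))_\infty\big)_\infty$ be the space of sequences $(x_n,y_n)_{n=1}^\infty$ with $(x_n,y_n)\in X_n\times\ell_\infty(\Delta_n)$ and norm $\sup_n\max\{\|x_n\|,\|y_n\|\}<\infty$. For $n\in\mathbb{N}$, $\mathcal{W}_n=\big(\oplus_{k=1}^n(X_k\oplus\ell_\infty(\Delta_k))_\infty\big)_\infty$ is identified with the subspace of $\mathcal{W}$ of sequences vanishing after the $n$-th term, and $(X_n\oplus\ell_\infty(\Delta_n))_\infty$ with the subspace of sequences supported on the $n$-th term; $r_n:\mathcal{W}\to\mathcal{W}_n$ is the restriction to the first $n$ terms, and $\pi_{X_n}:\mathcal{W}\to X_n$ is the canonical quotient map $(x_k,y_k)_k\mapsto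 x_n$. Let $C\geq 1$ and $i_n:\mathcal{W}_n\to\mathcal{W}$ be linear maps with: (a) $\|i_n\|\leq C$ for all $n$; (b) $r_ni_n$ is the identity of $\mathcal{W}_n$; (c) $i_nr_ni_m=i_m$ for all $m\leq n$; (d) $\pi_{X_n}i_m=0$ for all $m<n$. Put $\mathcal{Z}_n=i_n\big((X_n\oplus\ell_\infty(\Delta_n))_\infty\big)$ and $\mathcal{Z}=\overline{\mathrm{span}}\bigcup_n\mathcal{Z}_n$; $\mathcal{Z}$ is called a $C$-Bourgain-Delbaen-$\mathscr{L}_\infty$ sum of $(X_n)$. A Schauder decomposition of a Banach space $Z$ is a sequence of closed subspaces $(Z_n)$ such that each $z\in Z$ uniquely equals $\sum_n z_n$ with $z_n\in Z_n$; its associated projections are $z\mapsto\sum_{k\le n}z_k$. *)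

From HB Require Import structures.
From mathcomp Require Import all_boot all_order all_algebra.
From mathcomp Require Import all_classical all_reals all_analysis.
Set Implicit Arguments. Unset Strict Implicit. Unset Printing Implicit Defensive.
Import Order.TTheory GRing.Theory Num.Theory.
Local Open Scope ring_scope.

(* Ambient type of sequences (x_n, y_n)_n with x_n in X n and y_n in
   l_infty(Delta_n) = (D n -> R).  The Banach space W is the subset of
   sequences of finite sup-norm (inW below). *)
Section BD.
Variables (R : realType) (X : nat -> completeNormedModType R) (D : nat -> finType).

Definition Wt := forall n : nat, (X n * (D n -> R))%type.

Definition zeroW : Wt := fun n => (0, fun _ => 0).
Definition addW (u v : Wt) : Wt :=
  fun n => ((u n).1 + (v n).1, fun k => (u n).2 k + (v n).2 k).
Definition scaleW (a : R) (u : Wt) : Wt :=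
  fun n => (a *: (u n).1, fun k => a * (u n).2 k).
Definition subW (u v : Wt) : Wt := addW u (scaleW (-1) v).

Definition linfty_norm n (y : D n -> R) : R := \big[Num.max/0]_(k : D n) `|y k|.

Definition blocknorm (u : Wt) n : R := Num.max `|(u n).1| (linfty_norm (u n).2).

(* norm of W (possibly +oo for unbounded sequences) *)
Definition normW (u : Wt) : \bar R :=
  ereal_sup [set (blocknorm u n)%:E | n in [set: nat]].

Definition inW (u : Wt) : Prop := (normW u < +oo)%E.

Definition inWn (n : nat) (u : Wt) : Prop :=
  forall k, (n < k)%N -> (u k).1 = 0 /\ forall d, (u k).2 d = 0.

(* (X_n + l_infty(Delta_n))_infty : sequences supported on the n-th term *)
Definition inBlock (n : nat) (u : Wt) : Prop :=
  forall k, k <> n -> (u k).1 = 0 /\ forall d, (u k).2 d = 0.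

(* restriction r_n to the first n terms (indices 0..n) *)
Definition restr (n : nat) (u : Wt) : Wt :=
  fun k => if (k <= n)%N then u k else zeroW k.

Definition piX (n : nat) (u : Wt) : X n := (u n).1.

Definition psum (f : nat -> Wt) (n : nat) : Wt :=
  foldr (fun k acc => addW (f k) acc) zeroW (iota 0 n.+1).

Definition spanW (S : Wt -> Prop) (v : Wt) : Prop :=
  exists l : seq (R * Wt), (forall p, p \in l -> S p.2) /\
    v = foldr (fun p acc => addW (scaleW p.1 p.2) acc) zeroW l.

Definition closureW (S : Wt -> Prop) (z : Wt) : Prop :=
  inW z /\ forall e : R, 0 < e -> exists s, S s /\ (normW (subW z s) < e%:E)%E.

Definition closedW (S : Wt -> Prop) : Prop := forall z, closureW S z -> S z.

Definition linsubW (S : Wt -> Prop) : Prop :=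
  [/\ S zeroW, forall u v, S u -> S v -> S (addW u v) &
      forall a u, S u -> S (scaleW a u)].

Definition series_eq (zs : nat -> Wt) (z : Wt) : Prop :=
  forall e : R, 0 < e -> exists N, forall n, (N <= n)%N ->
    (normW (subW z (psum zs n)) < e%:E)%E.

Definition schauder_decomposition (Z : Wt -> Prop) (Zs : nat -> Wt -> Prop) : Prop :=
  (forall n, [/\ linsubW (Zs n), closedW (Zs n) & forall z, Zs n z -> Z z]) /\
  (forall z, Z z -> exists! zs : nat -> Wt,
       (forall n, Zs n (zs n)) /\ series_eq zs z).

Definition associated_projections (Z : Wt -> Prop) (Zs : nat -> Wt -> Prop)
  (P : nat -> Wt -> Wt) : Prop :=
  forall z, Z z -> forall zs : nat -> Wt,
    (forall n, Zs n (zs n)) -> series_eq zs z ->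
    forall n, P n z = psum zs n.

(* C-Bourgain-Delbaen-L_infty data: maps i_n : W_n -> W (only their values
   on W_n are relevant) *)
Definition BD_data (C : R) (i : nat -> Wt -> Wt) : Prop :=
  1 <= C /\
  [/\ (forall n a u v, inWn n u -> inWn n v ->
          i n (addW (scaleW a u) v) = addW (scaleW a (i n u)) (i n v)),
      (forall n u, inWn n u -> (normW (i n u) <= C%:E * normW u)%E),
      (forall n u, inWn n u -> restr n (i n u) = u),
      (forall m n u, (m <= n)%N -> inWn m u -> i n (restr n (i m u)) = i m u) &
      (forall m n u, (m < n)%N -> inWn m u -> piX n (i m u) = 0)].

Definition Zn (i : nat -> Wt -> Wt) (n : nat) (z : Wt) : Prop :=
  exists u, inBlock n u /\ z = i n u.

Definition Zsum (i : nat -> Wt -> Wt) : Wt -> Prop :=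
  closureW (spanW (fun z => exists n, Zn i n z)).

End BD.

From HB Require Import structures.
From mathcomp Require Import all_boot all_order all_algebra.
From mathcomp Require Import all_classical all_reals all_analysis.
Import Order.TTheory GRing.Theory Num.Theory.
Local Open Scope ring_scope.
Set Implicit Arguments. Unset Strict Implicit. Unset Printing Implicit Defensive.

(* Write P_n = i_n r_n.  By (a)-(c), P_n is linear with norm at most C on all of W,
   P_m fixes i_k(W_k) for k <= m and kills Z_k for k > m.  Hence the block projections
   P_n - P_(n-1) are bounded projections with fixed-point set exactly Z_n (so Z_n is
   closed), and they telescope to P_n.  If P_n s = s then
   |z - P_n z| <= (1 + C) |z - s|, and every element of span (U Z_k) is fixed by P_n for
   large n, so P_n z -> z on the closure Z.  Conversely, applying the bounded P_m to a
   series z = sum z_k with z_k in Z_k gives P_m z = sum_(k <= m) z_k, which forces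
   uniqueness. *)

Section SequenceSpace.
Variables (R : realType) (X : nat -> completeNormedModType R) (D : nat -> finType).
Local Notation W := (Wt X D).
Implicit Types (u v s z : W) (M e : R).

Lemma W_ext u v : (forall n, u n = v n) -> u = v.
Proof. exact: functional_extensionality_dep. Qed.

Definition oppW u : W := fun n => - u n.

Lemma addWA : associative (@addW R X D).
Proof. by move=> u v w; apply: W_ext => n; exact: addrA. Qed.

Lemma addWC : commutative (@addW R X D).
Proof. by move=> u v; apply: W_ext => n; exact: addrC. Qed.

Lemma add0W : left_id (zeroW X D) (@addW R X D).
Proof. by move=> u; apply: W_ext => n; exact: add0r. Qed.

Lemma addNW : left_inverse (zeroW X D) oppW (@addW R X D).
Proof. by move=> u; apply: W_ext => n; exact: addNr. Qed.

HB.instance Definition _ := Choice.on W.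
HB.instance Definition _ := GRing.isZmodule.Build W addWA addWC add0W addNW.

Lemma scaleWA a b u : scaleW a (scaleW b u) = scaleW (a * b) u.
Proof. by apply: W_ext => n; exact: scalerA. Qed.

Lemma scale1W u : scaleW 1 u = u.
Proof. by apply: W_ext => n; exact: scale1r. Qed.

Lemma scaleWDr a : {morph scaleW a : u v / u + v}.
Proof. by move=> u v; apply: W_ext => n; exact: scalerDr. Qed.

Lemma scaleWDl u : {morph (fun a => scaleW a u) : a b / a + b}.
Proof. by move=> a b; apply: W_ext => n; exact: scalerDl. Qed.

HB.instance Definition _ :=
  GRing.Zmodule_isLmodule.Build R W scaleWA scale1W scaleWDr scaleWDl.

Lemma zeroWE : zeroW X D = 0. Proof. by []. Qed.
Lemma addWE u v : addW u v = u + v. Proof. by []. Qed.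
Lemma scaleWE a u : scaleW a u = a *: u. Proof. by []. Qed.

Lemma subWE u v : subW u v = u - v.
Proof. by apply: W_ext => n; rewrite /subW addWE scaleWE /= scaleN1r. Qed.

Lemma addWn u v n : (u + v) n = u n + v n. Proof. by []. Qed.
Lemma scaleWn a u n : (a *: u) n = a *: u n. Proof. by []. Qed.

Lemma blocknorm_ge0 u n : 0 <= blocknorm u n.
Proof. by rewrite le_max normr_ge0. Qed.

Lemma blocknorm_fst u n : `|(u n).1| <= blocknorm u n.
Proof. by rewrite le_max lexx. Qed.

Lemma blocknorm_snd u n d : `|(u n).2 d| <= blocknorm u n.
Proof. by rewrite le_max (le_bigmax _ _ d) orbT. Qed.

Lemma blocknorm_le u n M : `|(u n).1| <= M -> (forall d, `|(u n).2 d| <= M) ->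
  blocknorm u n <= M.
Proof.
move=> le1 le2; rewrite ge_max le1; apply: bigmax_le => [|d _].
  exact: le_trans (normr_ge0 _) le1.
exact: le2.
Qed.

Lemma blocknormD u v n : blocknorm (u + v) n <= blocknorm u n + blocknorm v n.
Proof.
apply: blocknorm_le => [|d]; apply: le_trans (ler_normD _ _) _; apply: lerD;
  by [apply: blocknorm_fst | apply: blocknorm_snd].
Qed.

Lemma blocknormZ a u n : blocknorm (a *: u) n <= `|a| * blocknorm u n.
Proof.
apply: blocknorm_le => [|d] /=; rewrite ?normrZ ?normrM ler_wpM2l //;
  by [apply: blocknorm_fst | apply: blocknorm_snd].
Qed.

Lemma block_eq0 u n : (u n).1 = 0 -> (forall d, (u n).2 d = 0) -> u n = 0.
Proof. by case: (u n) => x y /= -> y0; congr pair; apply: funext. Qed.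

Lemma blocknorm_le0 u n : blocknorm u n <= 0 -> u n = 0.
Proof.
move=> le0; apply: block_eq0 => [|d]; apply/eqP; rewrite -normr_le0.
  exact: le_trans (blocknorm_fst u n) le0.
by apply: le_trans le0; apply: blocknorm_snd.
Qed.

Definition bounded_by u M := forall n, blocknorm u n <= M.

Lemma bounded_by_ge0 u M : bounded_by u M -> 0 <= M.
Proof. by move=> uM; apply: le_trans (blocknorm_ge0 u 0) (uM 0%N). Qed.

Lemma bounded_by_le u M M' : bounded_by u M -> M <= M' -> bounded_by u M'.
Proof. by move=> uM leM n; apply: le_trans (uM n) leM. Qed.

Lemma bounded_by0 : bounded_by 0 0.
Proof. by move=> n; apply: blocknorm_le => [|d] /=; rewrite normr0. Qed.

Lemma bounded_byD u v M M' :
  bounded_by u M -> bounded_by v M' -> bounded_by (u + v) (M + M').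
Proof. by move=> uM vM' n; apply: le_trans (blocknormD u v n) (lerD (uM n) (vM' n)). Qed.

Lemma bounded_byZ a u M : bounded_by u M -> bounded_by (a *: u) (`|a| * M).
Proof. by move=> uM n; apply: le_trans (blocknormZ a u n) (ler_wpM2l _ (uM n)). Qed.

Lemma bounded_byN u M : bounded_by u M -> bounded_by (- u) M.
Proof. by move/(bounded_byZ (-1)); rewrite scaleN1r normrN normr1 mul1r. Qed.

Lemma bounded_byB u v M M' :
  bounded_by u M -> bounded_by v M' -> bounded_by (u - v) (M + M').
Proof. by move=> uM /bounded_byN; apply: bounded_byD. Qed.

Lemma bounded_by_eq0 u : (forall e, 0 < e -> bounded_by u e) -> u = 0.
Proof.
move=> small; apply: W_ext => n; apply: blocknorm_le0.
by apply/ler_addgt0Pr => e /small/(_ n); rewrite add0r.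
Qed.

Lemma normW_ge_blocknorm u n : ((blocknorm u n)%:E <= normW u)%E.
Proof. by apply: ereal_sup_ubound; exists n. Qed.

Lemma normW_ge0 u : (0 <= normW u)%E.
Proof. by apply: le_trans (normW_ge_blocknorm u 0); rewrite lee_fin blocknorm_ge0. Qed.

Lemma bounded_by_normW u M : bounded_by u M -> (normW u <= M%:E)%E.
Proof. by move=> uM; apply: ge_ereal_sup => _ [n _ <-]; rewrite lee_fin. Qed.

Lemma bounded_by_inW u M : bounded_by u M -> inW u.
Proof. by move/bounded_by_normW/le_lt_trans; apply; apply: ltey. Qed.

Lemma normW_lt_bounded_by u e :
  (normW u < e%:E)%E -> exists2 M, M < e & bounded_by u M.
Proof.
case E: (normW u) => [M| |] //; last by have := normW_ge0 u; rewrite E.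
rewrite lte_fin => ltMe; exists M => // n.
by have := normW_ge_blocknorm u n; rewrite E lee_fin.
Qed.

Lemma closureW_bounded_by S z e :
  closureW S z -> 0 < e -> exists2 s, S s & bounded_by (z - s) e.
Proof.
move=> [_ approx] /approx [s [Ss]]; rewrite subWE => /normW_lt_bounded_by [M ltMe zsM].
by exists s => //; apply: bounded_by_le zsM (ltW ltMe).
Qed.

Lemma mem_closureW (S : W -> Prop) z M : S z -> bounded_by z M -> closureW S z.
Proof.
move=> Sz /bounded_by_inW Wz; split=> // e e_gt0; exists z; split=> //.
by rewrite subWE subrr; apply: le_lt_trans (bounded_by_normW bounded_by0) _; rewrite lte_fin.
Qed.

Lemma psumE (f : nat -> W) n : psum f n = \sum_(0 <= k < n.+1) f k.
Proof. by rewrite /psum unlock. Qed.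

Lemma series_eqP (zs : nat -> W) z : series_eq zs z <->
  forall e, 0 < e -> exists N, forall n, (N <= n)%N -> bounded_by (z - psum zs n) e.
Proof.
split=> [conv e /conv [N near_z] | conv e e_gt0].
  exists N => n /near_z; rewrite subWE => /normW_lt_bounded_by [M ltMe zM].
  exact: bounded_by_le zM (ltW ltMe).
have [N near_z] := conv (e / 2) (divr_gt0 e_gt0 (ltr0Sn R 1)).
exists N => n /near_z /bounded_by_normW; rewrite subWE => /le_lt_trans; apply.
by rewrite lte_fin ltr_pdivrMr // ltr_pMr // ltr1n.
Qed.

Lemma psum0 (f : nat -> W) : psum f 0 = f 0%N.
Proof. by rewrite psumE big_nat1. Qed.

Lemma psumS (f : nat -> W) n : psum f n.+1 = psum f n + f n.+1.
Proof. by rewrite !psumE big_nat_recr. Qed.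

Lemma psum_inj (f g : nat -> W) : psum f =1 psum g -> f = g.
Proof.
move=> fg; apply: funext => -[|n]; first by rewrite -psum0 fg psum0.
by apply: (@addrI _ (psum f n)); rewrite -psumS fg psumS fg.
Qed.

Lemma restrE n u k : restr n u k = if (k <= n)%N then u k else 0.
Proof. by []. Qed.

Lemma restr_is_linear n : linear (restr n).
Proof.
move=> a u v; apply: W_ext => k; rewrite addWn scaleWn !restrE.
by case: ifP => // _; rewrite scaler0 addr0.
Qed.

HB.instance Definition _ n :=
  GRing.isLinear.Build R W W *:%R (restr n) (restr_is_linear n).

Lemma restr_restr m n u : (m <= n)%N -> restr m (restr n u) = restr m u.
Proof.
by move=> le_mn; apply: W_ext => k; rewrite !restrE; case: ifP => // /leq_trans ->.
Qed.

Lemma inWn_restr n u : inWn n (restr n u).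
Proof. by move=> k; rewrite restrE ltnNge => /negbTE ->. Qed.

Lemma inBlock_inWn n u : inBlock n u -> inWn n u.
Proof. by move=> Bu k lt_nk; apply: Bu => eq_kn; rewrite eq_kn ltnn in lt_nk. Qed.

Lemma restr_inBlock m k u : (m < k)%N -> inBlock k u -> restr m u = 0.
Proof.
move=> lt_mk Bu; apply: W_ext => j; rewrite restrE; case: ifP => // le_jm.
have ne_jk : j <> k by move=> eq_jk; rewrite eq_jk leqNgt lt_mk in le_jm.
by have [u1 u2] := Bu j ne_jk; apply: block_eq0.
Qed.

Lemma inBlock_restr n u : (forall k, (k < n)%N -> u k = 0) -> inBlock n (restr n u).
Proof.
move=> low0 k ne_kn; rewrite restrE; case: ifP => // le_kn.
by rewrite low0 // ltn_neqAle le_kn andbT; apply/eqP.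
Qed.

Lemma bounded_by_restr n u M : bounded_by u M -> bounded_by (restr n u) M.
Proof.
move=> uM k; have [le_kn | lt_nk] := leqP k n.
  by have := uM k; rewrite /blocknorm restrE le_kn.
apply: blocknorm_le => [|d]; rewrite restrE leqNgt lt_nk /= normr0; exact: bounded_by_ge0 uM.
Qed.

Lemma inWn_bounded_by n u : inWn n u -> exists M, bounded_by u M.
Proof.
move=> Wn_u; exists (\sum_(k < n.+1) blocknorm u k) => k.
have [le_kn | /Wn_u [u1 u2]] := leqP k n.
  rewrite (bigD1 (Ordinal (le_kn : (k < n.+1)%N))) //= lerDl.
  by apply: sumr_ge0 => j _; apply: blocknorm_ge0.
have uk_le0 : blocknorm u k <= 0 by apply: blocknorm_le => [|d]; rewrite ?u1 ?u2 normr0.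
by apply: le_trans uk_le0 (sumr_ge0 _ _) => j _; apply: blocknorm_ge0.
Qed.

Section FixedPoints.
Variables (L : W -> W) (K : R).
Hypotheses (K_ge0 : 0 <= K) (LB : {morph L : u v / u - v})
  (bounded_by_L : forall u M, bounded_by u M -> bounded_by (L u) (K * M)).

Let K1_gt0 : 0 < 1 + K := ltr_pwDl ltr01 K_ge0.

Lemma bounded_by_sub_fixed z s e :
  L s = s -> bounded_by (z - s) (e / (1 + K)) -> bounded_by (z - L z) e.
Proof.
move=> Ls zs.
have -> : z - L z = (z - s) + L (s - z) by rewrite LB Ls addrA subrK.
rewrite -[e](divfK (lt0r_neq0 K1_gt0)) mulrDr mulr1 [_ * K]mulrC.
apply: bounded_byD (zs) (bounded_by_L _); rewrite -opprB; exact: bounded_byN zs.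
Qed.

Lemma closedW_fixed : closedW (fun z => L z = z).
Proof.
move=> z clz; apply/esym/subr0_eq/bounded_by_eq0 => e e_gt0.
have [s Ls zs] := closureW_bounded_by clz (divr_gt0 e_gt0 K1_gt0).
exact: bounded_by_sub_fixed Ls zs.
Qed.

End FixedPoints.

End SequenceSpace.

Section BourgainDelbaen.
Variables (R : realType) (X : nat -> completeNormedModType R) (D : nat -> finType).
Local Notation W := (Wt X D).
Implicit Types (u v s z : W) (M e : R).
Variables (C : R) (i : nat -> W -> W).
Hypothesis bdC : BD_data C i.

Definition proj n z := i n (restr n z).

Lemma C_ge1 : 1 <= C.
Proof. by case: bdC. Qed.

Lemma i_linear n a u v : inWn n u -> inWn n v ->
  i n (a *: u + v) = a *: i n u + i n v.
Proof. by case: bdC => _ [+ _ _ _ _]; apply. Qed.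

Lemma bounded_by_i n u M : inWn n u -> bounded_by u M -> bounded_by (i n u) (C * M).
Proof.
case: bdC => C_ge1 [_ normi _ _ _] Wn_u uM k; rewrite -lee_fin.
apply: le_trans (normW_ge_blocknorm _ k) (le_trans (normi _ _ Wn_u) _).
by rewrite EFinM lee_pmul ?normW_ge0 ?bounded_by_normW // lee_fin (le_trans ler01).
Qed.

Lemma restr_i n u : inWn n u -> restr n (i n u) = u.
Proof. by case: bdC => _ [_ _ + _ _]; apply. Qed.

Lemma proj_i m n u : (m <= n)%N -> inWn m u -> proj n (i m u) = i m u.
Proof. by case: bdC => _ [_ _ _ + _]; apply. Qed.

Lemma i0 n : i n 0 = 0.
Proof.
have Wn0 : inWn n (0 : W) by [].
by have := i_linear (-1) Wn0 Wn0; rewrite scaler0 addr0 scaleN1r addNr.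
Qed.

Lemma proj_is_linear n : linear (proj n).
Proof. by move=> a u v; rewrite /proj restr_is_linear i_linear //; apply: inWn_restr. Qed.

HB.instance Definition _ n :=
  GRing.isLinear.Build R W W *:%R (proj n) (proj_is_linear n).

Lemma bounded_by_proj n z M : bounded_by z M -> bounded_by (proj n z) (C * M).
Proof. by move/(bounded_by_restr n); apply: bounded_by_i; apply: inWn_restr. Qed.

Lemma restr_proj n z : restr n (proj n z) = restr n z.
Proof. exact/restr_i/inWn_restr. Qed.

Lemma proj_proj m n z : (m <= n)%N -> proj n (proj m z) = proj m z.
Proof. by move=> le_mn; apply/proj_i/inWn_restr. Qed.

Lemma proj_Zn m k z : Zn i k z -> proj m z = if (k <= m)%N then z else 0.
Proof.
case=> u [Bu ->]; have Wk_u := inBlock_inWn Bu.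
case: leqP => [le_km | lt_mk]; first exact: proj_i.
by rewrite /proj -(restr_restr _ (ltnW lt_mk)) restr_i // (restr_inBlock lt_mk Bu) i0.
Qed.

Definition block_proj n z := if n is m.+1 then proj n z - proj m z else proj 0 z.

Lemma block_proj_is_linear n : linear (block_proj n).
Proof.
case: n => [|m] a u v /=; first exact: linearP.
by rewrite (linearP (proj m.+1)) (linearP (proj m)) scalerBr opprD addrACA.
Qed.

HB.instance Definition _ n :=
  GRing.isLinear.Build R W W *:%R (block_proj n) (block_proj_is_linear n).

Lemma bounded_by_block_proj n z M :
  bounded_by z M -> bounded_by (block_proj n z) ((C + C) * M).
Proof.
move=> zM; case: n => [|m] /=; last by rewrite mulrDl; apply: bounded_byB; apply: bounded_by_proj.
apply: bounded_by_le (bounded_by_proj 0 zM) _.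
by rewrite ler_wpM2r ?(bounded_by_ge0 zM) // lerDl (le_trans ler01 C_ge1).
Qed.

Lemma block_proj_Zn n z : Zn i n (block_proj n z).
Proof.
case: n => [|m] /=; first by exists (restr 0 z); split=> //; apply: inBlock_restr.
exists (restr m.+1 (z - proj m z)); split.
  have low0 : restr m (z - proj m z) = 0.
    by rewrite linearB /= restr_proj subrr.
  apply: inBlock_restr => k lt_km; have := congr1 (fun w : W => w k) low0.
  by rewrite restrE -ltnS lt_km.
by rewrite -[i _ _]/(proj m.+1 _) linearB /= proj_proj.
Qed.

Lemma Zn_block_proj n z : Zn i n z -> block_proj n z = z.
Proof.
by case: n => [|m] Zz /=; rewrite !(proj_Zn _ Zz) ?leqnn // ltnn subr0.
Qed.

Lemma Zn_fixed n : Zn i n = (fun z => block_proj n z = z).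
Proof.
apply: funext => z; apply: propext; split; first exact: Zn_block_proj.
by move=> <-; apply: block_proj_Zn.
Qed.

Lemma psum_block_proj z n : psum (block_proj^~ z) n = proj n z.
Proof. by elim: n => [|n IHn]; rewrite ?psum0 // psumS IHn /= addrC subrK. Qed.

Lemma Zn_linsub n : linsubW (Zn i n).
Proof.
rewrite Zn_fixed; split=> [|u v Pu Pv|a u Pu]; rewrite ?zeroWE ?addWE ?scaleWE.
- exact: linear0.
- by rewrite linearD /= Pu Pv.
- by rewrite linearZ /= Pu.
Qed.

Lemma Zn_closed n : closedW (Zn i n).
Proof.
rewrite Zn_fixed; apply: (@closedW_fixed _ _ _ _ (C + C)).
- by rewrite addr_ge0 // (le_trans ler01 C_ge1).
- exact: linearB.
- exact: bounded_by_block_proj.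
Qed.

Local Notation Zunion := (fun z => exists n, Zn i n z).

Lemma spanW_proj_fixed s :
  spanW Zunion s -> exists N, forall n, (N <= n)%N -> proj n s = s.
Proof.
case=> l [Zl ->]; elim: l Zl => [|[a w] l IHl] Zl /=.
  by exists 0%N => n _; rewrite zeroWE linear0.
have [N fixN] := IHl (fun p lp => Zl p (@mem_behead _ ((a, w) :: l) p lp)).
have [m Zw] : Zunion w := Zl (a, w) (mem_head _ _).
exists (maxn N m) => n; rewrite geq_max => /andP[le_Nn le_mn].
by rewrite addWE scaleWE linearP /= fixN // (proj_Zn _ Zw) le_mn.
Qed.

Lemma spanW_psum (f : nat -> W) n : (forall k, Zunion (f k)) -> spanW Zunion (psum f n).
Proof.
move=> Zf; exists [seq (1, f k) | k <- iota 0 n.+1]; split.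
  by move=> _ /mapP [k _ ->]; apply: Zf.
by rewrite /psum; elim: (iota 0 n.+1) => //= k l ->; rewrite scale1W.
Qed.

Lemma Zsum_i n u : inWn n u -> Zsum i (i n u).
Proof.
move=> Wn_u; have [M uM] := inWn_bounded_by Wn_u.
apply: mem_closureW (bounded_by_i Wn_u uM).
rewrite -(proj_i (leqnn n) Wn_u) -psum_block_proj.
by apply: spanW_psum => k; exists k; apply: block_proj_Zn.
Qed.

Lemma Zn_Zsum n z : Zn i n z -> Zsum i z.
Proof. by case=> u [/inBlock_inWn Wn_u ->]; apply: Zsum_i. Qed.

Lemma series_block_proj z : Zsum i z -> series_eq (block_proj^~ z) z.
Proof.
move=> Zz; apply/series_eqP => e e_gt0.
have C1_gt0 : 0 < 1 + C by rewrite ltr_pwDl // (le_trans ler01 C_ge1).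
have [s span_s zs] := closureW_bounded_by Zz (divr_gt0 e_gt0 C1_gt0).
have [N fixN] := spanW_proj_fixed span_s.
exists N => n le_Nn; rewrite psum_block_proj.
apply: (bounded_by_sub_fixed _ (linearB (proj n)) _ (fixN n le_Nn) zs).
- exact: le_trans ler01 C_ge1.
- exact: bounded_by_proj.
Qed.

Lemma proj_psum (zs : nat -> W) m n : (forall k, Zn i k (zs k)) -> (m <= n)%N ->
  proj m (psum zs n) = psum zs m.
Proof.
move=> Zzs le_mn; rewrite !psumE linear_sum (@big_cat_nat _ _ _ m.+1) //=.
have -> : \sum_(m.+1 <= k < n.+1) proj m (zs k) = 0.
  rewrite big_nat_cond big1 // => k /andP[/andP[lt_mk _] _].
  by rewrite (proj_Zn _ (Zzs k)) leqNgt lt_mk.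
rewrite addr0; apply: eq_big_nat => k /andP[_ lt_km].
by rewrite (proj_Zn _ (Zzs k)) -ltnS lt_km.
Qed.

Lemma proj_series (zs : nat -> W) z : (forall k, Zn i k (zs k)) -> series_eq zs z ->
  forall m, proj m z = psum zs m.
Proof.
move=> Zzs /series_eqP conv m; apply/subr0_eq/bounded_by_eq0 => e e_gt0.
have C_gt0 : 0 < C by apply: lt_le_trans C_ge1.
have [N near_z] := conv _ (divr_gt0 e_gt0 C_gt0).
have := bounded_by_proj m (near_z _ (leq_maxl N m)).
by rewrite linearB /= proj_psum ?leq_maxr // mulrC divfK ?gt_eqF.
Qed.

End BourgainDelbaen.

Theorem mainTheorem4 (R : realType) (X : nat -> completeNormedModType R)
  (D : nat -> finType) (C : R) (i : nat -> Wt X D -> Wt X D) :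
  BD_data C i ->
  (schauder_decomposition (Zsum i) (Zn i) /\
   associated_projections (Zsum i) (Zn i) (fun n z => i n (restr n z))) /\
  (forall n (w : Wt X D),
     (exists z, Zsum i z /\ w = i n (restr n z)) <->
     (exists u, inWn n u /\ w = i n u)).
Proof.
move=> bdC; split; [split; [split|] |].
- move=> n; split=> [|z clz|z Zz].
  + exact: (Zn_linsub bdC n).
  + exact: (Zn_closed bdC clz).
  + exact: (Zn_Zsum bdC Zz).
- move=> z Zz; exists (block_proj i^~ z); split.
    by split; [move=> n; apply: (block_proj_Zn bdC) | apply: (series_block_proj bdC)].
  move=> zs [Zzs sum_zs]; apply: psum_inj => m.
  by rewrite psum_block_proj (proj_series bdC Zzs sum_zs).
- by move=> z _ zs Zzs sum_zs n; apply: (proj_series bdC Zzs sum_zs).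
- move=> n w; split=> [[z [_ ->]] | [u [Wn_u ->]]].
    by exists (restr n z); split=> //; apply: inWn_restr.
  by exists (i n u); split; [apply: (Zsum_i bdC) | rewrite (restr_i bdC)].
Qed.
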